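(* Let $n\ge 2$ and let $A$ be an associative (not necessarily unital) algebra over a field satisfying the identity $x_1x_2\cdots x_{n-1}x_n=x_nx_2\cdots x_{n-1}x_1$ (i.e. the identity associated with the transposition $(1\,n)\in S_n$). Then $A$ is eventually commutative of degree $n+1$.
   Context: An algebra $A$ satisfies an identity $x_1\cdots x_m=x_{\tau(1)}\cdots x_{\tau(m)}$ (with $\tau\in S_m$) if $a_1\cdots a_m=a_{\tau(1)}\cdots a_{\tau(m)}$ for all $a_1,\dots,a_m\in A$. $A$ is eventually commutative of degree $k$ if it satisfies $x_1\cdots x_k=x_{\tau(1)}\cdots x_{\tau(k)}$ for every $\tau\in S_k$. *)

From HB Require Import structures.
From mathcomp Require Import all_boot all_order all_algebra all_fingroup.
Set Implicit Arguments. Unset Strict Implicit. Unset Printing Implicit Defensive.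
Import GRing.Theory.
Local Open Scope ring_scope.

Definition is_assoc_algebra (K : fieldType) (V : lmodType K)
    (mul : V -> V -> V) : Prop :=
  [/\ associative mul,
      (forall (a : K) (x y z : V), mul (a *: x + y) z = a *: mul x z + mul y z)
    & (forall (a : K) (x y z : V), mul z (a *: x + y) = a *: mul z x + mul z y)].

(* The empty list is sent to
   an arbitrary value x0 (never used below since m >= 1 in all uses). *)
Definition mprod (T : Type) (mul : T -> T -> T) (x0 : T) (s : seq T) : T :=
  match s with [::] => x0 | x :: t => foldl mul x t end.

Definition satisfies_identity (K : fieldType) (V : lmodType K)
    (mul : V -> V -> V) (m : nat) (tau : 'S_m) : Prop :=
  forall a : 'I_m -> V,
    mprod mul 0 [seq a i | i <- enum 'I_m]
    = mprod mul 0 [seq a (tau i) | i <- enum 'I_m].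

Definition eventually_commutative (K : fieldType) (V : lmodType K)
    (mul : V -> V -> V) (k : nat) : Prop :=
  forall tau : 'S_k, satisfies_identity mul tau.

Definition swap_first_last (n : nat) : 'S_n :=
  match n return 'S_n with
  | 0 => 1%g
  | k.+1 => tperm (ord0 : 'I_k.+1) ord_max
  end.

From HB Require Import structures.
From mathcomp Require Import all_boot all_order all_algebra all_fingroup.
From mathcomp Require Import zify.

Set Implicit Arguments.
Unset Strict Implicit.
Unset Printing Implicit Defensive.

(* Grouping consecutive factors into one, the identity x M y = y M x with
   |M| = n - 2 holds for every longer middle word M and inside any context.
   In a word of length n + 1 it lets one rotate the n - 1 middle factors and
   exchange the first factor with the n-th or the last one; conjugating by
   rotations, the first factor can be exchanged with any other, and these
   exchanges generate all permutations. *)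

Section SwapInvariance.

Variables (T : eqType) (R : Type) (f : seq T -> R) (N : nat).

Hypothesis f_head_swap : forall x u y v,
  size (x :: u ++ y :: v) = N -> f (x :: u ++ y :: v) = f (y :: u ++ x :: v).

Lemma swap_invariant p x u y v : size (p ++ x :: u ++ y :: v) = N ->
  f (p ++ x :: u ++ y :: v) = f (p ++ y :: u ++ x :: v).
Proof.
case: p => [|h p] sizeN; first exact: f_head_swap.
(* (i j) = (0 i) (0 j) (0 i) *)
have := @f_head_swap x (p ++ h :: u) y v; rewrite -!catA /= => swap_xy.
rewrite /= (@f_head_swap h p x) ?(@f_head_swap h p y) ?swap_xy //;
  by move: sizeN; rewrite /= !size_cat /= ?size_cat.
Qed.

Lemma perm_invariant_cat p s t : size (p ++ s) = N -> perm_eq s t ->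
  f (p ++ s) = f (p ++ t).
Proof.
elim: s p t => [|x s IH] p t sizeN st.
  by move: st; rewrite perm_sym => /perm_nilP ->.
have xt : x \in t by rewrite -(perm_mem st) mem_head.
move: st; case/splitPr: xt => t1 t2 st.
have [t' ft' st'] : exists2 t', f (p ++ t1 ++ x :: t2) = f (p ++ x :: t')
    & perm_eq s t'.
  case: t1 st => [|y t1] st; first by exists t2; rewrite // -(perm_cons x).
  exists (t1 ++ y :: t2); last first.
    rewrite -(perm_cons x) (perm_trans st) //.
    by apply/seq.permP => P; rewrite /= !count_cat /=; lia.
  by rewrite swap_invariant // -sizeN !size_cat (perm_size st) /= !size_cat.
by rewrite ft' -!cat_rcons; apply: IH st'; rewrite cat_rcons.
Qed.

Lemma perm_invariant s t : size s = N -> perm_eq s t -> f s = f t.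
Proof. exact: (@perm_invariant_cat [::]). Qed.

End SwapInvariance.

Section SwapEnds.

Variables (T : Type) (mul : T -> T -> T) (x0 : T) (k : nat).
Hypothesis mulA : associative mul.
Local Notation prod := (mprod mul x0).

Lemma foldl_mulA x y s : foldl mul (mul x y) s = mul x (foldl mul y s).
Proof. by elim: s y => [|z s IH] y //=; rewrite -mulA IH. Qed.

Lemma prod_group p y m q :
  prod (p ++ y :: m ++ q) = prod (p ++ prod (y :: m) :: q).
Proof.
case: p => [|h p] /=; first by rewrite foldl_cat.
by rewrite !foldl_cat /= foldl_cat foldl_mulA.
Qed.

Hypothesis swap_ends : forall x M y,
  size M = k -> prod (x :: M ++ [:: y]) = prod (y :: M ++ [:: x]).

Lemma swap_ends_ge x M y : k <= size M ->
  prod (x :: M ++ [:: y]) = prod (y :: M ++ [:: x]).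
Proof.
(* For k = 0 the identity is commutativity; otherwise group the last
   size M - k + 1 factors of M into one. *)
case: k swap_ends => [|k'] swap_ends' leMk.
  have mulC : commutative mul by move=> a b; apply: (swap_ends' a [::] b).
  by rewrite /= !foldl_cat /= mulC -foldl_mulA (mulC y) foldl_mulA mulC.
rewrite -(cat_take_drop k' M); case Edrop: (drop k' M) => [|m M2].
  by move: (congr1 size Edrop); rewrite size_drop /=; lia.
have size_middle : size (rcons (take k' M) (prod (m :: M2))) = k'.+1.
  by rewrite size_rcons size_take leMk.
rewrite -!catA !(prod_group (_ :: take k' M)).
by have := swap_ends' x _ y size_middle; rewrite !cat_rcons.
Qed.

Lemma swap_far p x M y q : k <= size M ->
  prod (p ++ x :: M ++ y :: q) = prod (p ++ y :: M ++ x :: q).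
Proof.
move=> leMk; have group z w :
    prod (p ++ z :: M ++ w :: q) = prod (p ++ prod (z :: M ++ [:: w]) :: q).
  by rewrite -prod_group -catA.
by rewrite !group swap_ends_ge.
Qed.

Lemma rot_middle1 x y s z : k <= size s ->
  prod (x :: y :: s ++ [:: z]) = prod (x :: s ++ [:: y; z]).
Proof.
move=> leks.
transitivity (prod (z :: s ++ [:: mul x y])).
  exact: (@swap_far [::] (mul x y) s z [::]).
transitivity (prod (z :: s ++ [:: x; y])).
  exact: esym (prod_group (z :: s) x [:: y] [::]).
transitivity (prod (y :: s ++ [:: x; z])).
  have := @swap_far [::] z (s ++ [:: x]) y [::]; rewrite -!catA; apply.
  by rewrite size_cat (leq_trans leks) ?leq_addr.
exact: (@swap_far [::] y s x [:: z]).
Qed.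

Lemma rot_middle x s1 s2 z : k < size (s1 ++ s2) ->
  prod (x :: s1 ++ s2 ++ [:: z]) = prod (x :: s2 ++ s1 ++ [:: z]).
Proof.
elim: s1 s2 => [|y s1 IH] s2 ltk //.
rewrite !cat_cons catA rot_middle1 //.
have -> : (s1 ++ s2) ++ [:: y; z] = s1 ++ (s2 ++ [:: y]) ++ [:: z] by rewrite -!catA.
by rewrite IH -?catA //; move: ltk; rewrite !size_cat /=; lia.
Qed.

Lemma head_swap x u y v : k.+3 <= size (x :: u ++ y :: v) ->
  prod (x :: u ++ y :: v) = prod (y :: u ++ x :: v).
Proof.
case/lastP: v => [|v z] lek; rewrite /= size_cat /= ?size_rcons in lek.
  by apply: (@swap_far [::] x u y [::]); lia.
(* Rotate the middle so that y comes next to z, exchange x and y, rotate back. *)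
have middle w a : w :: u ++ a :: rcons v z = w :: (u ++ [:: a]) ++ v ++ [:: z].
  by rewrite -cats1 -!catA.
rewrite !middle rot_middle; last by rewrite !size_cat /=; lia.
rewrite (@rot_middle y (u ++ [:: x]) v); last by rewrite !size_cat /=; lia.
have := @swap_far [::] x (v ++ u) y [:: z]; rewrite -!catA /=; apply.
by rewrite size_cat; lia.
Qed.

End SwapEnds.

Lemma map_nth_enum_ord (T : Type) (x0 : T) (s : seq T) n : size s = n ->
  [seq nth x0 s i | i : 'I_n <- enum 'I_n] = s.
Proof.
move=> <-; rewrite -[RHS](mkseq_nth x0) /mkseq -val_enum_ord -map_comp.
by apply: eq_map.
Qed.

Lemma swap_ends_of_identity (K : fieldType) (V : lmodType K) (mul : V -> V -> V)
    k :
  satisfies_identity mul (swap_first_last k.+2) -> forall x M y, size M = k ->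
  mprod mul 0%R (x :: M ++ [:: y]) = mprod mul 0%R (y :: M ++ [:: x]).
Proof.
move=> swap_id x M y sizeM; have sizeS a b : size (a :: M ++ [:: b]) = k.+2.
  by rewrite /= size_cat sizeM addn1.
have := swap_id (fun i => nth 0%R (x :: M ++ [:: y]) i).
rewrite !(map_nth_enum_ord _ (sizeS _ _)) => ->.
congr mprod; rewrite -(map_nth_enum_ord 0%R (sizeS y x)); apply: eq_map => i /=.
case: tpermP => [->|->|].
- by rewrite /= nth_cat sizeM ltnn subnn.
- by rewrite /= nth_cat sizeM ltnn subnn.
case: i => [[|j] ltj] i0 imax; first by case: i0; apply: val_inj.
have ltjM : j < size M.
  have : j.+1 <> k.+1 by move=> ej; apply: imax; apply: val_inj.
  by rewrite sizeM; lia.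
by rewrite /= !nth_cat ltjM.
Qed.

Lemma eventually_commutative_of_perm (K : fieldType) (V : lmodType K)
    (mul : V -> V -> V) m :
  (forall s t, size s = m -> perm_eq s t -> mprod mul 0%R s = mprod mul 0%R t) ->
  eventually_commutative mul m.
Proof.
move=> prod_perm tau a; apply: prod_perm; first by rewrite size_map size_enum_ord.
rewrite (map_comp a tau); apply: perm_map.
apply: uniq_perm; rewrite ?enum_uniq ?(map_inj_uniq perm_inj) ?enum_uniq //.
by move=> i; rewrite mem_enum -[RHS]/(i \in codom tau) perm_onto.
Qed.

Theorem theorem3p5 (K : fieldType) (V : lmodType K) (mul : V -> V -> V)
    (n : nat) (hn : (2 <= n)%N) :
  is_assoc_algebra mul ->
  satisfies_identity mul (swap_first_last n) ->
  eventually_commutative mul n.+1.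
Proof.
case: n hn => [|[|k]] // _ [mulA _ _] swap_id.
apply: eventually_commutative_of_perm => s t sizeN.
apply: perm_invariant sizeN => x u y v sizeN'.
apply: (head_swap mulA (swap_ends_of_identity swap_id)).
by rewrite sizeN'.
Qed.
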